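(* Let $\beta_{H\leftarrow M},\beta_{M\leftarrow H},\rho,\gamma,\mu>0$, $l\ge0$, $p,q\in[0,1]$ with $c(p,q)+l>0$. For every solution of system (VBH) with initial condition in $\Omega$, $$\lim_{t\to+\infty}I_P(t)=\lim_{t\to+\infty}I_{NP}(t)=\lim_{t\to+\infty}I_M(t)=0.$$
   Context: Let $c(p,q):=1-p(1-q)$. System (VBH) is the ODE system $$S_P'=-\beta_{H\leftarrow M}\rho I_M\frac{qS_P}{c(p,q)+l},\qquad I_P'=\beta_{H\leftarrow M}\rho I_M\frac{qS_P}{c(p,q)+l}-\gamma I_P,$$ $$S_{NP}'=-\beta_{H\leftarrow M}\rho I_M\frac{S_{NP}}{c(p,q)+l},\qquad I_{NP}'=\beta_{H\leftarrow M}\rho I_M\frac{S_{NP}}{c(p,q)+l}-\gamma I_{NP},$$ $$I_M'=\beta_{M\leftarrow H}(1-I_M)\frac{qI_P+I_{NP}}{c(p,q)+l}-\mu I_M,$$ with constant parameters $p,q,l$. Let $\Omega:=\{(S_P,I_P,S_{NP},I_{NP},I_M)\in\mathbb{R}^5_{\ge0}:\ S_P+I_P+S_{NP}+I_{NP}\le1,\ I_M\le1\}$. *)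

From Stdlib Require Import Reals.
From Coquelicot Require Import Coquelicot.
Open Scope R_scope.

Definition cpq (p q : R) : R := 1 - p * (1 - q).

Definition VBH_solution (bHM bMH rho gamma mu p q l : R)
    (SP IP SNP INP IM : R -> R) : Prop :=
  filterlim SP (at_right 0) (locally (SP 0)) /\
  filterlim IP (at_right 0) (locally (IP 0)) /\
  filterlim SNP (at_right 0) (locally (SNP 0)) /\
  filterlim INP (at_right 0) (locally (INP 0)) /\
  filterlim IM (at_right 0) (locally (IM 0)) /\
  forall t, 0 < t ->
    is_derive SP t (- bHM * rho * IM t * (q * SP t / (cpq p q + l))) /\
    is_derive IP t (bHM * rho * IM t * (q * SP t / (cpq p q + l)) - gamma * IP t) /\
    is_derive SNP t (- bHM * rho * IM t * (SNP t / (cpq p q + l))) /\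
    is_derive INP t (bHM * rho * IM t * (SNP t / (cpq p q + l)) - gamma * INP t) /\
    is_derive IM t (bMH * (1 - IM t) * ((q * IP t + INP t) / (cpq p q + l)) - mu * IM t).

Definition in_Omega (sp ip snp inp im : R) : Prop :=
  0 <= sp /\ 0 <= ip /\ 0 <= snp /\ 0 <= inp /\ 0 <= im /\
  sp + ip + snp + inp <= 1 /\ im <= 1.

From Stdlib Require Import Reals Lra List Classical.
From Coquelicot Require Import Coquelicot.
Import ListNotations.
Open Scope R_scope.

(* Positivity: on a time interval [0, T] the six quantities S_P, I_P, S_NP, I_NP, I_M and 1 - I_M
   are bounded by some B, and the right-hand side of (VBH) is such that whenever one of them is
   negative and the smallest of the six, its derivative exceeds Lam times its value, for a Lam
   depending only on B. Weighted by exp(-Lam t), the smallest one then increases whenever it is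
   negative, so the minimum of the family never becomes negative.

   Convergence: with eps = gamma (c + l) / (2 beta_{M<-H}), the function
   E = S_P + I_P + S_NP + I_NP + eps I_M is nonnegative with E' <= -delta g, where
   g = I_P + I_NP + I_M, and g' is bounded below. Each time g reaches a level eta it stays above
   eta/2 for a fixed time, so E drops by a fixed amount; since E >= 0 this happens only finitely
   often, hence g -> 0. *)

Lemma is_derive_Rplus (f g : R -> R) (x a b : R) :
  is_derive f x a -> is_derive g x b -> is_derive (fun y => f y + g y) x (a + b).
Proof. intros; now apply (is_derive_plus f g). Qed.

Lemma is_derive_Rscal (k : R) (f : R -> R) (x a : R) :
  is_derive f x a -> is_derive (fun y => k * f y) x (k * a).
Proof. intros; now apply (is_derive_scal f x k a). Qed.

Lemma is_derive_const_minus (k : R) (f : R -> R) (x a : R) :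
  is_derive f x a -> is_derive (fun y => k - f y) x (- a).
Proof.
  intros Hf. replace (- a) with (minus 0 a) by (unfold minus, plus, opp; simpl; ring).
  apply (is_derive_minus (fun _ => k) f); [|exact Hf].
  exact (is_derive_const (K := R_AbsRing) (V := R_NormedModule) k x).
Qed.

Lemma is_derive_continuous (f : R -> R) (x a : R) : is_derive f x a -> continuous f x.
Proof. intros Hf. apply (ex_derive_continuous (K := R_AbsRing) (V := R_NormedModule)). now exists a. Qed.

Lemma continuous_Rmin (f g : R -> R) (x : R) :
  continuous f x -> continuous g x -> continuous (fun y => Rmin (f y) (g y)) x.
Proof.
  intros Hf Hg.
  apply (continuous_ext (fun y => (f y + g y - Rabs (f y - g y)) * / 2)).
  - intros y. unfold Rmin. destruct (Rle_dec (f y) (g y)).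
    + rewrite Rabs_left1; lra.
    + rewrite Rabs_right; lra.
  - apply (continuous_mult (fun y => f y + g y - Rabs (f y - g y)) (fun _ => / 2));
      [|apply continuous_const].
    apply (continuous_minus (fun y => f y + g y)); [now apply (continuous_plus f g)|].
    apply continuous_Rabs_comp. now apply (continuous_minus f g).
Qed.

Lemma continuous_Rmax0 (f : R -> R) (c : R) :
  filterlim f (at_right 0) (locally (f 0)) -> (0 < c -> continuous f c) -> 0 <= c ->
  continuous (fun t => f (Rmax 0 t)) c.
Proof.
  intros Hf0 Hf Hc. destruct (Rle_lt_or_eq_dec _ _ Hc) as [Hcpos | <-].
  - apply (continuous_ext_loc _ f); [|now apply Hf].
    apply (locally_open (fun y => 0 < y)); [apply open_gt| |exact Hcpos].
    intros y Hy. now rewrite Rmax_right by lra.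
  - intros P HP. rewrite Rmax_left in HP by lra.
    destruct (Hf0 P HP) as [del Hdel]. exists del. intros y Hy.
    destruct (Rle_or_lt y 0).
    + rewrite Rmax_left by lra. now apply locally_singleton.
    + rewrite Rmax_right by lra. now apply Hdel.
Qed.

Lemma bounded_of_right_continuous (f : R -> R) (T : R) :
  filterlim f (at_right 0) (locally (f 0)) -> (forall t, 0 < t <= T -> continuous f t) ->
  0 <= T -> exists B, forall t, 0 <= t <= T -> Rabs (f t) <= B.
Proof.
  intros Hf0 Hf HT.
  destruct (continuity_ab_maj (fun t => Rabs (f (Rmax 0 t))) 0 T HT) as [M [HM _]].
  { intros c Hc. apply continuity_pt_filterlim, (continuous_Rabs_comp (fun t => f (Rmax 0 t))).
    apply continuous_Rmax0; [exact Hf0 | intros; apply Hf; lra | lra]. }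
  exists (Rabs (f (Rmax 0 M))). intros t Ht.
  specialize (HM t Ht). now rewrite Rmax_right in HM by lra.
Qed.

Lemma increment_le_of_derive_le (f : R -> R) (a b K : R) :
  a <= b -> (forall x, a <= x <= b -> exists d, is_derive f x d /\ d <= K) ->
  f b - f a <= K * (b - a).
Proof.
  intros Hab Hd.
  assert (Hf : forall x, a <= x <= b -> is_derive f x (Derive f x)).
  { intros x Hx. destruct (Hd x Hx) as [d [Hfd _]].
    now rewrite (is_derive_unique f x d Hfd). }
  destruct (MVT_gen f a b (Derive f)) as [c [Hc ->]]; cbv zeta in *;
    rewrite Rmin_left, Rmax_right in * by lra.
  - intros x Hx. apply Hf. lra.
  - intros x Hx. apply continuity_pt_filterlim. exact (is_derive_continuous _ _ _ (Hf x Hx)).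
  - destruct (Hd c Hc) as [d [Hfd HdK]]. rewrite (is_derive_unique f c d Hfd).
    apply Rmult_le_compat_r; lra.
Qed.

Lemma increment_ge_of_derive_ge (f : R -> R) (a b K : R) :
  a <= b -> (forall x, a <= x <= b -> exists d, is_derive f x d /\ K <= d) ->
  K * (b - a) <= f b - f a.
Proof.
  intros Hab Hd.
  assert (H := increment_le_of_derive_le (fun x => - f x) a b (- K) Hab).
  enough (- f b - - f a <= - K * (b - a)) by lra.
  apply H. intros x Hx. destruct (Hd x Hx) as [d [Hfd HKd]].
  exists (- d). split; [|lra]. now apply (is_derive_opp f x d).
Qed.

Lemma derive_pos_lt_left (f : R -> R) (a c d : R) :
  is_derive f c d -> 0 < d -> a < c -> exists s, a < s < c /\ f s < f c.
Proof.
  intros Hf Hd Hac. apply is_derive_Reals in Hf.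
  destruct (Hf d Hd) as [[del Hdel0] Hdel]; simpl in Hdel.
  set (h := Rmin (del / 2) ((c - a) / 2)).
  assert (Hh1 := Rmin_l (del / 2) ((c - a) / 2)).
  assert (Hh2 := Rmin_r (del / 2) ((c - a) / 2)).
  assert (Hh : 0 < h) by (apply Rmin_glb_lt; lra). fold h in Hh1, Hh2.
  exists (c - h). split; [lra|].
  specialize (Hdel (- h) ltac:(lra) ltac:(rewrite Rabs_Ropp, Rabs_pos_eq; lra)).
  apply Rabs_def2 in Hdel. replace (c + - h) with (c - h) in Hdel by ring.
  set (Q := (f (c - h) - f c) / - h) in Hdel.
  assert (HQ : f (c - h) - f c = - (Q * h)) by (unfold Q; field; lra).
  assert (0 < Q * h) by (apply Rmult_lt_0_compat; lra). lra.
Qed.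

Lemma bounded_family_of_right_continuous (fs : list (R -> R)) (T : R) : 0 <= T ->
  (forall f, In f fs -> filterlim f (at_right 0) (locally (f 0))) ->
  (forall f t, In f fs -> 0 < t <= T -> continuous f t) ->
  exists B, forall f t, In f fs -> 0 <= t <= T -> Rabs (f t) <= B.
Proof.
  intros HT. induction fs as [|f fs IH]; intros Hf0 Hf.
  - exists 0. intros g t [].
  - destruct (bounded_of_right_continuous f T (Hf0 f (or_introl eq_refl))
                (fun t Ht => Hf f t (or_introl eq_refl) Ht) HT) as [Bf HBf].
    destruct IH as [B HB].
    { intros g Hg. apply Hf0. now right. }
    { intros g t Hg Ht. apply Hf; [now right | exact Ht]. }
    exists (Rmax Bf B). intros g t [<- | Hg] Ht.
    + eapply Rle_trans; [apply HBf, Ht | apply Rmax_l].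
    + eapply Rle_trans; [apply HB; [exact Hg | exact Ht] | apply Rmax_r].
Qed.

Lemma fold_Rmin_le (x0 x : R) (xs : list R) : In x (x0 :: xs) -> fold_right Rmin x0 xs <= x.
Proof.
  induction xs as [|y xs IH]; simpl; intros Hx.
  - destruct Hx as [<- | []]. lra.
  - destruct Hx as [<- | [<- | Hx]].
    + eapply Rle_trans; [apply Rmin_r | apply IH; now left].
    + apply Rmin_l.
    + eapply Rle_trans; [apply Rmin_r | apply IH; now right].
Qed.

Lemma fold_Rmin_In (x0 : R) (xs : list R) : In (fold_right Rmin x0 xs) (x0 :: xs).
Proof.
  induction xs as [|y xs IH]; simpl; [now left|].
  destruct (Rle_or_lt y (fold_right Rmin x0 xs)).
  - rewrite Rmin_left by lra. tauto.
  - rewrite Rmin_right by lra. simpl in IH. tauto.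
Qed.

Lemma continuous_fold_Rmin (f0 : R -> R) (fs : list (R -> R)) (t : R) :
  (forall f, In f (f0 :: fs) -> continuous f t) ->
  continuous (fun s => fold_right Rmin (f0 s) (map (fun f => f s) fs)) t.
Proof.
  induction fs as [|f fs IH]; simpl; intros Hf.
  - apply Hf. now left.
  - apply (continuous_Rmin f); [apply Hf; tauto|].
    apply IH. intros g [<- | Hg]; apply Hf; tauto.
Qed.

(* The minimum of the family is continuous and attains its minimum over [0, T] at some c;
   if it were negative there, c > 0 and the minimizing member would be smaller just before c. *)
Lemma nonneg_of_min_principle (Fs : list (R -> R)) (T : R) :
  (forall F t, In F Fs -> 0 <= t <= T -> continuous F t) ->
  (forall F, In F Fs -> 0 <= F 0) ->
  (forall F t, In F Fs -> 0 < t <= T -> F t < 0 -> (forall G, In G Fs -> F t <= G t) ->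
     exists d, is_derive F t d /\ 0 < d) ->
  forall F t, In F Fs -> 0 <= t <= T -> 0 <= F t.
Proof.
  intros Hcont Hinit Hrise F t HF Ht.
  destruct Fs as [|F0 Fs]; [destruct HF|].
  set (m s := fold_right Rmin (F0 s) (map (fun G => G s) Fs)).
  assert (Hm_le : forall G s, In G (F0 :: Fs) -> m s <= G s).
  { intros G s HG. apply fold_Rmin_le.
    destruct HG as [<- | HG]; [now left | right; now apply (in_map (fun G => G s))]. }
  assert (Hm_attained : forall s, exists G, In G (F0 :: Fs) /\ m s = G s).
  { intros s. destruct (fold_Rmin_In (F0 s) (map (fun G => G s) Fs)) as [Hs | Hs].
    - exists F0. split; [now left | easy].
    - apply in_map_iff in Hs as [G [HGs HG]]. exists G. split; [now right | easy]. }
  destruct (continuity_ab_min m 0 T) as [c [Hmin Hc]]; [lra | |].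
  { intros s Hs. apply continuity_pt_filterlim, continuous_fold_Rmin.
    intros G HG. now apply Hcont. }
  enough (0 <= m c) by (specialize (Hmin t Ht); specialize (Hm_le F t HF); lra).
  destruct (Rle_or_lt 0 (m c)) as [|Hneg]; [easy | exfalso].
  destruct (Hm_attained c) as [G [HG HGc]].
  assert (Hc0 : 0 < c).
  { destruct (Hm_attained 0) as [G0 [HG0 HG00]]. specialize (Hinit G0 HG0).
    destruct (Req_dec c 0) as [-> |]; lra. }
  destruct (Hrise G c HG ltac:(lra) ltac:(lra)) as [d [HGd Hd]].
  { intros G' HG'. rewrite <- HGc. now apply Hm_le. }
  destruct (derive_pos_lt_left G 0 c d HGd Hd Hc0) as [s [Hs HGs]].
  specialize (Hmin s ltac:(lra)). specialize (Hm_le G s HG). lra.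
Qed.

Lemma is_derive_exp_weight (f : R -> R) (Lam c d : R) : 0 < c -> is_derive f c d ->
  is_derive (fun t => f (Rmax 0 t) * exp (- Lam * t)) c ((d - Lam * f c) * exp (- Lam * c)).
Proof.
  intros Hc Hf.
  apply (is_derive_ext_loc (fun t => f t * exp (- Lam * t))).
  { apply (locally_open (fun y => 0 < y)); [apply open_gt | | exact Hc].
    intros y Hy. now rewrite Rmax_right by lra. }
  assert (He : is_derive (fun t => exp (- Lam * t)) c (- Lam * exp (- Lam * c)))
    by (auto_derive; [easy | ring]).
  replace ((d - Lam * f c) * exp (- Lam * c))
    with (plus (mult d (exp (- Lam * c))) (mult (f c) (- Lam * exp (- Lam * c))))
    by (unfold plus, mult; simpl; ring).
  exact (is_derive_mult f (fun t => exp (- Lam * t)) c _ _ Hf He (fun n m => Rmult_comm n m)).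
Qed.

(* Weighting by exp(-Lam t) turns the growth condition into the sign condition of the plain principle. *)
Lemma nonneg_of_weighted_min_principle (fs : list (R -> R)) (T Lam : R) :
  (forall f, In f fs -> filterlim f (at_right 0) (locally (f 0))) ->
  (forall f, In f fs -> 0 <= f 0) ->
  (forall f t, In f fs -> 0 < t <= T -> ex_derive f t) ->
  (forall f t, In f fs -> 0 < t <= T -> f t < 0 -> (forall g, In g fs -> f t <= g t) ->
     Lam * f t < Derive f t) ->
  forall f t, In f fs -> 0 <= t <= T -> 0 <= f t.
Proof.
  intros Hcont0 Hinit Hder Hgrowth f t Hf Ht.
  set (weight g s := g (Rmax 0 s) * exp (- Lam * s)).
  assert (Hweight : forall g s, 0 <= s -> weight g s = g s * exp (- Lam * s))
    by (intros g s Hs; unfold weight; now rewrite Rmax_right).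
  assert (Hw := nonneg_of_min_principle (map weight fs) T).
  enough (0 <= weight f t) as Hft.
  { rewrite Hweight in Hft by lra. pose proof (exp_pos (- Lam * t)). nra. }
  apply Hw; [| | | now apply in_map | exact Ht]; clear Hw.
  - intros G s HG Hs. apply in_map_iff in HG as [g [<- Hg]].
    apply (continuous_mult (fun s => g (Rmax 0 s)) (fun s => exp (- Lam * s))).
    + apply continuous_Rmax0; [now apply Hcont0 | | lra].
      intros Hs0. destruct (Hder g s Hg ltac:(lra)) as [d Hd]. exact (is_derive_continuous _ _ _ Hd).
    + apply (is_derive_continuous _ _ (- Lam * exp (- Lam * s))). auto_derive; [easy | ring].
  - intros G HG. apply in_map_iff in HG as [g [<- Hg]].
    rewrite Hweight, Rmult_0_r, exp_0, Rmult_1_r by lra. now apply Hinit.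
  - intros G s HG Hs HGs Hmin. apply in_map_iff in HG as [g [<- Hg]].
    pose proof (exp_pos (- Lam * s)) as Hexp.
    rewrite Hweight in HGs by lra.
    assert (Hgs : g s < 0) by nra.
    assert (Hmin' : forall h, In h fs -> g s <= h s).
    { intros h Hh. specialize (Hmin (weight h) (in_map weight fs h Hh)).
      rewrite !Hweight in Hmin by lra. now apply Rmult_le_reg_r in Hmin. }
    specialize (Hgrowth g s Hg Hs Hgs Hmin').
    exists ((Derive g s - Lam * g s) * exp (- Lam * s)). split.
    + apply is_derive_exp_weight; [lra | apply Derive_correct, Hder; auto].
    + apply Rmult_lt_0_compat; lra.
Qed.

Section Dissipation.

Variables (E g : R -> R) (t0 delta M : R).
Hypotheses (Hdelta : 0 < delta) (HM : 0 < M).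
Hypothesis HE_nonneg : forall t, t0 <= t -> 0 <= E t.
Hypothesis Hg_nonneg : forall t, t0 <= t -> 0 <= g t.
Hypothesis HE_dissipative : forall t, t0 <= t -> exists d, is_derive E t d /\ d <= - delta * g t.
Hypothesis Hg_derive_lb : forall t, t0 <= t -> exists d, is_derive g t d /\ - M <= d.

Lemma dissipation_nonincreasing (s t : R) : t0 <= s <= t -> E t <= E s.
Proof.
  intros Hst.
  enough (E t - E s <= 0 * (t - s)) by lra.
  apply increment_le_of_derive_le; [lra|]. intros x Hx.
  destruct (HE_dissipative x ltac:(lra)) as [d [Hd Hdg]]. exists d. split; [exact Hd|].
  specialize (Hg_nonneg x ltac:(lra)). nra.
Qed.

(* Since g' >= -M, g stays above eta/2 for a time eta/(2M) after reaching eta. *)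
Lemma dissipation_drop (eta t : R) : 0 < eta -> t0 <= t -> eta <= g t ->
  E (t + eta / (2 * M)) <= E t - delta * (eta / 2) * (eta / (2 * M)).
Proof.
  intros Heta Ht Hgt. set (h := eta / (2 * M)).
  assert (Hh : 0 < h) by (unfold h; apply Rdiv_lt_0_compat; lra).
  assert (HMh : M * h = eta / 2) by (unfold h; field; lra).
  assert (Hg_half : forall s, t <= s <= t + h -> eta / 2 <= g s).
  { intros s Hs.
    assert (Hinc := increment_ge_of_derive_ge g t s (- M) ltac:(lra)
                      (fun x Hx => Hg_derive_lb x ltac:(lra))).
    assert (M * (s - t) <= M * h) by (apply Rmult_le_compat_l; lra). lra. }
  enough (E (t + h) - E t <= - delta * (eta / 2) * (t + h - t)) by lra.
  apply increment_le_of_derive_le; [lra|]. intros x Hx.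
  destruct (HE_dissipative x ltac:(lra)) as [d [Hd Hdg]]. exists d. split; [exact Hd|].
  specialize (Hg_half x Hx). nra.
Qed.

Lemma dissipation_eventually_lt (eta : R) : 0 < eta -> exists N, forall t, N < t -> g t < eta.
Proof.
  intros Heta. apply NNPP. intros Hnot.
  assert (Hhit : forall N, exists t, N < t /\ eta <= g t).
  { intros N. apply NNPP. intros HN. apply Hnot. exists N. intros t Ht.
    apply Rnot_le_lt. intros Hle. apply HN. now exists t. }
  set (c0 := delta * (eta / 2) * (eta / (2 * M))).
  assert (Hh : 0 < eta / (2 * M)) by (apply Rdiv_lt_0_compat; lra).
  assert (Hc0 : 0 < c0) by (unfold c0; apply Rmult_lt_0_compat; [apply Rmult_lt_0_compat|]; lra).
  assert (Hdecay : forall k : nat, exists t, t0 <= t /\ E t <= E t0 - INR k * c0).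
  { induction k as [|k [t [Ht HEt]]].
    - exists t0. simpl. lra.
    - destruct (Hhit t) as [t' [Htt' Hgt']]. exists (t' + eta / (2 * M)).
      split; [lra|].
      assert (Hdrop := dissipation_drop eta t' Heta ltac:(lra) Hgt').
      assert (Hmono := dissipation_nonincreasing t t' ltac:(lra)).
      rewrite S_INR. fold c0 in Hdrop. lra. }
  destruct (INR_archimed c0 (E t0) Hc0) as [n Hn].
  destruct (Hdecay n) as [t [Ht HEt]]. specialize (HE_nonneg t Ht). lra.
Qed.

Lemma is_lim_dissipation : is_lim g p_infty 0.
Proof.
  apply is_lim_spec. intros eps. destruct (dissipation_eventually_lt eps (cond_pos eps)) as [N HN].
  exists (Rmax N t0). intros t Ht.
  assert (HtN := Rmax_l N t0). assert (Ht0 := Rmax_r N t0).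
  specialize (HN t ltac:(lra)). specialize (Hg_nonneg t ltac:(lra)).
  rewrite Rminus_0_r, Rabs_right by lra. exact HN.
Qed.

End Dissipation.

Lemma is_lim_p_infty_squeeze_0 (f g : R -> R) (t0 : R) :
  (forall t, t0 < t -> 0 <= f t <= g t) -> is_lim g p_infty 0 -> is_lim f p_infty 0.
Proof.
  intros Hfg Hg. apply (is_lim_le_le_loc (fun _ => 0) g f); [| apply is_lim_const | exact Hg].
  exists t0. exact Hfg.
Qed.

Lemma le_scale_of_le_nonpos (q y z : R) : 0 <= q <= 1 -> z <= y -> z <= 0 -> z <= q * y.
Proof. intros Hq Hzy Hz. destruct (Rle_or_lt 0 y); nra. Qed.

Lemma mul_ge_of_bounds (u v x B : R) : x <= u <= B -> x <= v <= B -> x <= 0 <= B -> B * x <= u * v.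
Proof. intros Hu Hv Hx. destruct (Rle_or_lt 0 u), (Rle_or_lt 0 v); nra. Qed.

Section VBH.

Variables (bHM bMH rho gamma mu p q l : R) (SP IP SNP INP IM : R -> R).
Hypotheses (HbHM : 0 < bHM) (HbMH : 0 < bMH) (Hrho : 0 < rho) (Hgamma : 0 < gamma)
  (Hmu : 0 < mu) (Hq : 0 <= q <= 1) (HK : 0 < cpq p q + l).
Hypothesis Hsol : VBH_solution bHM bMH rho gamma mu p q l SP IP SNP INP IM.
Hypothesis Hinit : in_Omega (SP 0) (IP 0) (SNP 0) (INP 0) (IM 0).

Local Notation K := (cpq p q + l).

Definition omega_family : list (R -> R) := [SP; IP; SNP; INP; IM; fun t => 1 - IM t].

(* The term A B absorbs the infection terms of the host equations and 2 Bb (B + 1) those of the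
   vector equation, where A = bHM rho / K and Bb = bMH / K. *)
Definition barrier_rate (B : R) : R := bHM * rho / K * B + 2 * (bMH / K) * (B + 1) + 1.

Section Quasipositivity.

Variables (B t : R).
Hypothesis Ht : 0 < t.
Hypotheses (HSP : - B <= SP t <= B) (HIP : - B <= IP t <= B) (HSNP : - B <= SNP t <= B)
  (HINP : - B <= INP t <= B) (HIM : - B <= IM t <= B).

Local Notation A := (bHM * rho / K).
Local Notation Bb := (bMH / K).

Let HA : 0 < A.
Proof. apply Rdiv_lt_0_compat; nra. Qed.

Let HBb : 0 < Bb.
Proof. apply Rdiv_lt_0_compat; lra. Qed.

Let barrier_rate_gt_hosts : A * B < barrier_rate B.
Proof. unfold barrier_rate. assert (0 <= Bb * (B + 1)) by nra. lra. Qed.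

Let barrier_rate_gt_vectors : 2 * Bb * (B + 1) < barrier_rate B.
Proof. unfold barrier_rate. assert (0 <= A * B) by nra. lra. Qed.

Let VBH_derive_at := proj2 (proj2 (proj2 (proj2 (proj2 Hsol)))) t Ht.

Lemma SP_quasipositive : SP t < 0 -> barrier_rate B * SP t < Derive SP t.
Proof.
  intros Hneg. rewrite (is_derive_unique _ _ _ (proj1 VBH_derive_at)).
  replace (- bHM * rho * IM t * (q * SP t / K)) with (- (A * (q * IM t)) * SP t) by (field; lra).
  assert (A * - B <= A * (q * IM t)) by (apply Rmult_le_compat_l; nra).
  assert (- (A * (q * IM t)) < barrier_rate B) by lra. nra.
Qed.

Lemma IP_quasipositive : IP t < 0 -> IP t <= SP t -> IP t <= IM t ->
  barrier_rate B * IP t < Derive IP t.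
Proof.
  intros Hneg HSP_min HIM_min. rewrite (is_derive_unique _ _ _ (proj1 (proj2 VBH_derive_at))).
  replace (bHM * rho * IM t * (q * SP t / K)) with (A * (q * (IM t * SP t))) by (field; lra).
  assert (B * IP t <= q * (IM t * SP t)).
  { apply le_scale_of_le_nonpos; [exact Hq | apply mul_ge_of_bounds | ]; nra. }
  assert (A * (B * IP t) <= A * (q * (IM t * SP t))) by (apply Rmult_le_compat_l; lra).
  nra.
Qed.

Lemma SNP_quasipositive : SNP t < 0 -> barrier_rate B * SNP t < Derive SNP t.
Proof.
  intros Hneg. rewrite (is_derive_unique _ _ _ (proj1 (proj2 (proj2 VBH_derive_at)))).
  replace (- bHM * rho * IM t * (SNP t / K)) with (- (A * IM t) * SNP t) by (field; lra).
  assert (A * - B <= A * IM t) by (apply Rmult_le_compat_l; nra).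
  assert (- (A * IM t) < barrier_rate B) by lra. nra.
Qed.

Lemma INP_quasipositive : INP t < 0 -> INP t <= SNP t -> INP t <= IM t ->
  barrier_rate B * INP t < Derive INP t.
Proof.
  intros Hneg HSNP_min HIM_min.
  rewrite (is_derive_unique _ _ _ (proj1 (proj2 (proj2 (proj2 VBH_derive_at))))).
  replace (bHM * rho * IM t * (SNP t / K)) with (A * (IM t * SNP t)) by (field; lra).
  assert (B * INP t <= IM t * SNP t) by (apply mul_ge_of_bounds; lra).
  assert (A * (B * INP t) <= A * (IM t * SNP t)) by (apply Rmult_le_compat_l; lra).
  nra.
Qed.

Lemma IM_quasipositive : IM t < 0 -> IM t <= IP t -> IM t <= INP t ->
  barrier_rate B * IM t < Derive IM t.
Proof.
  intros Hneg HIP_min HINP_min.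
  rewrite (is_derive_unique _ _ _ (proj2 (proj2 (proj2 (proj2 VBH_derive_at))))).
  replace (bMH * (1 - IM t) * ((q * IP t + INP t) / K))
    with (Bb * ((1 - IM t) * (q * IP t + INP t))) by (field; lra).
  assert (IM t <= q * IP t) by (apply le_scale_of_le_nonpos; lra).
  assert (2 * (B + 1) * IM t <= (1 - IM t) * (q * IP t + INP t)) by nra.
  assert (Bb * (2 * (B + 1) * IM t) <= Bb * ((1 - IM t) * (q * IP t + INP t)))
    by (apply Rmult_le_compat_l; lra).
  nra.
Qed.

Lemma one_minus_IM_quasipositive : 1 - IM t < 0 ->
  barrier_rate B * (1 - IM t) < Derive (fun s => 1 - IM s) t.
Proof.
  intros Hneg.
  replace (Derive (fun s => 1 - IM s) t)
    with (- (bMH * (1 - IM t) * ((q * IP t + INP t) / K) - mu * IM t))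
    by (symmetry; apply is_derive_unique, is_derive_const_minus,
        (proj2 (proj2 (proj2 (proj2 VBH_derive_at))))).
  replace (bMH * (1 - IM t) * ((q * IP t + INP t) / K))
    with (Bb * ((1 - IM t) * (q * IP t + INP t))) by (field; lra).
  assert (- B <= q * IP t) by (apply le_scale_of_le_nonpos; lra).
  assert (2 * B * (1 - IM t) <= - ((1 - IM t) * (q * IP t + INP t))) by nra.
  assert (Bb * (2 * B * (1 - IM t)) <= Bb * - ((1 - IM t) * (q * IP t + INP t)))
    by (apply Rmult_le_compat_l; lra).
  nra.
Qed.

End Quasipositivity.

Lemma omega_family_quasipositive (B t : R) : 0 < t ->
  (forall f, In f omega_family -> Rabs (f t) <= B) ->
  forall f, In f omega_family -> f t < 0 -> (forall g, In g omega_family -> f t <= g t) ->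
  barrier_rate B * f t < Derive f t.
Proof.
  intros Ht Hbound f Hf Hneg Hmin.
  assert (Hbetween : forall g, In g omega_family -> - B <= g t <= B)
    by (intros g Hg; apply Rabs_le_between, Hbound, Hg).
  simpl in Hbetween, Hmin.
  assert (HSP := Hbetween SP ltac:(tauto)). assert (HIP := Hbetween IP ltac:(tauto)).
  assert (HSNP := Hbetween SNP ltac:(tauto)). assert (HINP := Hbetween INP ltac:(tauto)).
  assert (HIM := Hbetween IM ltac:(tauto)).
  simpl in Hf. destruct Hf as [<- | [<- | [<- | [<- | [<- | [<- | []]]]]]].
  - now apply SP_quasipositive.
  - apply IP_quasipositive; try assumption; apply Hmin; tauto.
  - now apply SNP_quasipositive.
  - apply INP_quasipositive; try assumption; apply Hmin; tauto.
  - apply IM_quasipositive; try assumption; apply Hmin; tauto.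
  - now apply one_minus_IM_quasipositive.
Qed.

Lemma omega_family_right_continuous (f : R -> R) :
  In f omega_family -> filterlim f (at_right 0) (locally (f 0)).
Proof.
  destruct Hsol as (c1 & c2 & c3 & c4 & c5 & _).
  simpl. intros [<- | [<- | [<- | [<- | [<- | [<- | []]]]]]]; try assumption.
  apply (filterlim_comp _ _ _ IM (fun x => 1 - x) _ (locally (IM 0)) _ c5).
  apply (continuous_minus (fun _ => 1) (fun x => x)); [apply continuous_const | apply continuous_id].
Qed.

Lemma omega_family_ex_derive (f : R -> R) (t : R) : In f omega_family -> 0 < t -> ex_derive f t.
Proof.
  intros Hf Ht. destruct Hsol as (_ & _ & _ & _ & _ & Hd).
  destruct (Hd t Ht) as (dSP & dIP & dSNP & dINP & dIM).
  simpl in Hf. destruct Hf as [<- | [<- | [<- | [<- | [<- | [<- | []]]]]]];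
    eexists; [exact dSP | exact dIP | exact dSNP | exact dINP | exact dIM |].
  exact (is_derive_const_minus 1 IM t _ dIM).
Qed.

Lemma omega_family_nonneg (f : R -> R) (t : R) : In f omega_family -> 0 <= t -> 0 <= f t.
Proof.
  intros Hf Ht.
  destruct (bounded_family_of_right_continuous omega_family t Ht omega_family_right_continuous)
    as [B HB].
  { intros g s Hg Hs. destruct (omega_family_ex_derive g s Hg ltac:(lra)) as [d Hd].
    exact (is_derive_continuous _ _ _ Hd). }
  apply (nonneg_of_weighted_min_principle omega_family t (barrier_rate B));
    [exact omega_family_right_continuous | | | | exact Hf | lra].
  - destruct Hinit as (i1 & i2 & i3 & i4 & i5 & _ & i7).
    simpl. intros g [<- | [<- | [<- | [<- | [<- | [<- | []]]]]]]; lra.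
  - intros g s Hg Hs. apply omega_family_ex_derive; [exact Hg | lra].
  - intros g s Hg Hs.
    apply omega_family_quasipositive; [lra | intros h Hh; apply HB; [exact Hh | lra] | exact Hg].
Qed.

Lemma VBH_nonneg (t : R) : 0 <= t ->
  0 <= SP t /\ 0 <= IP t /\ 0 <= SNP t /\ 0 <= INP t /\ 0 <= IM t <= 1.
Proof.
  intros Ht.
  assert (H := fun f Hf => omega_family_nonneg f t Hf Ht). simpl in H.
  repeat split; [apply H; tauto .. |].
  enough (0 <= 1 - IM t) by lra. apply (H (fun s => 1 - IM s)). tauto.
Qed.

Definition hosts (t : R) : R := SP t + IP t + SNP t + INP t.

Definition infected (t : R) : R := IP t + INP t + IM t.

Definition lyapunov (t : R) : R := hosts t + gamma * K / (2 * bMH) * IM t.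

Lemma hosts_derive (t : R) : 0 < t -> is_derive hosts t (- gamma * (IP t + INP t)).
Proof.
  intros Ht. destruct Hsol as (_ & _ & _ & _ & _ & Hd).
  destruct (Hd t Ht) as (dSP & dIP & dSNP & dINP & _).
  unfold hosts.
  replace (- gamma * (IP t + INP t)) with
    (- bHM * rho * IM t * (q * SP t / K) + (bHM * rho * IM t * (q * SP t / K) - gamma * IP t)
     + - bHM * rho * IM t * (SNP t / K) + (bHM * rho * IM t * (SNP t / K) - gamma * INP t))
    by ring.
  apply is_derive_Rplus; [apply is_derive_Rplus; [apply is_derive_Rplus|]|]; assumption.
Qed.

Lemma hosts_nonincreasing (s t : R) : 0 < s <= t -> hosts t <= hosts s.
Proof.
  intros Hst.
  enough (hosts t - hosts s <= 0 * (t - s)) by lra.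
  apply increment_le_of_derive_le; [lra|]. intros x Hx.
  exists (- gamma * (IP x + INP x)). split; [apply hosts_derive; lra|].
  destruct (VBH_nonneg x ltac:(lra)) as (_ & HIP & _ & HINP & _). nra.
Qed.

(* eps = gamma K / (2 bMH) is chosen so that the new infections of hosts by vectors
   contribute at most half of the host recovery term. *)
Lemma lyapunov_dissipative (t : R) : 0 < t ->
  exists d, is_derive lyapunov t d /\
    d <= - Rmin (gamma / 2) (gamma * K / (2 * bMH) * mu) * infected t.
Proof.
  intros Ht. destruct Hsol as (_ & _ & _ & _ & _ & Hd).
  destruct (Hd t Ht) as (_ & _ & _ & _ & dIM).
  eexists. split.
  { apply is_derive_Rplus; [apply hosts_derive, Ht | apply is_derive_Rscal, dIM]. }
  set (eps := gamma * K / (2 * bMH)).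
  assert (Heps : 0 < eps) by (apply Rdiv_lt_0_compat; nra).
  destruct (VBH_nonneg t ltac:(lra)) as (_ & HIP & _ & HINP & HIM).
  replace (eps * (bMH * (1 - IM t) * ((q * IP t + INP t) / K) - mu * IM t))
    with (gamma / 2 * ((1 - IM t) * (q * IP t + INP t)) - eps * mu * IM t)
    by (unfold eps; field; lra).
  assert (Hqip : q * IP t <= IP t) by nra.
  assert (Hnew : (1 - IM t) * (q * IP t + INP t) <= IP t + INP t) by nra.
  set (m := Rmin (gamma / 2) (eps * mu)).
  assert (Hm1 : m <= gamma / 2) by apply Rmin_l. assert (Hm2 : m <= eps * mu) by apply Rmin_r.
  assert (gamma / 2 * ((1 - IM t) * (q * IP t + INP t)) <= gamma / 2 * (IP t + INP t))
    by (apply Rmult_le_compat_l; lra).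
  assert (m * (IP t + INP t) <= gamma / 2 * (IP t + INP t)) by (apply Rmult_le_compat_r; lra).
  assert (m * IM t <= eps * mu * IM t) by (apply Rmult_le_compat_r; lra).
  unfold infected. lra.
Qed.

Lemma infected_derive_lb (t : R) : 1 <= t ->
  exists d, is_derive infected t d /\ - (gamma * hosts 1 + mu) <= d.
Proof.
  intros Ht. destruct Hsol as (_ & _ & _ & _ & _ & Hd).
  destruct (Hd t ltac:(lra)) as (_ & dIP & _ & dINP & dIM).
  eexists. split.
  { apply is_derive_Rplus; [apply is_derive_Rplus|]; eassumption. }
  destruct (VBH_nonneg t ltac:(lra)) as (HSP & HIP & HSNP & HINP & HIM).
  assert (Hhosts := hosts_nonincreasing 1 t ltac:(lra)). unfold hosts at 1 in Hhosts.
  assert (HKinv : 0 < / K) by (apply Rinv_0_lt_compat; lra).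
  assert (0 <= q * IP t) by nra.
  assert (0 <= bHM * rho * IM t * (q * SP t / K)) by (repeat apply Rmult_le_pos; lra).
  assert (0 <= bHM * rho * IM t * (SNP t / K)) by (repeat apply Rmult_le_pos; lra).
  assert (0 <= bMH * (1 - IM t) * ((q * IP t + INP t) / K)) by (repeat apply Rmult_le_pos; lra).
  assert (gamma * (IP t + INP t) <= gamma * hosts 1) by (apply Rmult_le_compat_l; lra).
  assert (mu * IM t <= mu) by nra.
  lra.
Qed.

Lemma infected_vanishes : is_lim infected p_infty 0.
Proof.
  assert (Hhosts1 : 0 <= hosts 1).
  { destruct (VBH_nonneg 1 ltac:(lra)) as (? & ? & ? & ? & _). unfold hosts. lra. }
  apply (is_lim_dissipation lyapunov infected 1
           (Rmin (gamma / 2) (gamma * K / (2 * bMH) * mu)) (gamma * hosts 1 + mu)).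
  - apply Rmin_glb_lt; [lra|]. apply Rmult_lt_0_compat; [apply Rdiv_lt_0_compat|]; nra.
  - nra.
  - intros t Ht. destruct (VBH_nonneg t ltac:(lra)) as (? & ? & ? & ? & ?).
    assert (0 <= gamma * K / (2 * bMH) * IM t).
    { apply Rmult_le_pos; [apply Rlt_le, Rdiv_lt_0_compat |]; nra. }
    unfold lyapunov, hosts. lra.
  - intros t Ht. destruct (VBH_nonneg t ltac:(lra)) as (? & ? & ? & ? & ?).
    unfold infected. lra.
  - intros t Ht. apply lyapunov_dissipative. lra.
  - exact infected_derive_lb.
Qed.

End VBH.

Theorem mainTheorem6 (bHM bMH rho gamma mu l p q : R)
  (HbHM : 0 < bHM) (HbMH : 0 < bMH) (Hrho : 0 < rho) (Hgamma : 0 < gamma)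
  (Hmu : 0 < mu) (Hl : 0 <= l) (Hp : 0 <= p <= 1) (Hq : 0 <= q <= 1)
  (Hc : 0 < cpq p q + l)
  (SP IP SNP INP IM : R -> R) :
  VBH_solution bHM bMH rho gamma mu p q l SP IP SNP INP IM ->
  in_Omega (SP 0) (IP 0) (SNP 0) (INP 0) (IM 0) ->
  is_lim IP p_infty 0 /\ is_lim INP p_infty 0 /\ is_lim IM p_infty 0.
Proof.
  intros Hsol Hinit.
  assert (Hlim := infected_vanishes bHM bMH rho gamma mu p q l SP IP SNP INP IM
                    HbHM HbMH Hrho Hgamma Hmu Hq Hc Hsol Hinit).
  assert (Hnonneg := VBH_nonneg bHM bMH rho gamma mu p q l SP IP SNP INP IM
                       HbHM HbMH Hrho Hgamma Hmu Hq Hc Hsol Hinit).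
  split; [|split]; apply (is_lim_p_infty_squeeze_0 _ (infected IP INP IM) 0); try exact Hlim;
    intros t Ht; destruct (Hnonneg t ltac:(lra)) as (_ & ? & _ & ? & ?); unfold infected; lra.
Qed.
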